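(* Let $n$ be odd and squarefree, let $p'$ be a prime divisor of $n$, and let $A=L(n;p')$. Let $S=(x_1,\ldots,x_l)$ be a sequence in $\mathbb{Z}_n$ such that for every prime divisor $p$ of $n$, at least two terms of $S$ are coprime to $p$. Let $n'=n/p'$ and let $S'$ be the image of $S$ under the natural map $\mathbb{Z}_n\to\mathbb{Z}_{n'}$. Suppose at most one term of $S'$ is a unit. Then $S$ is an $A$-weighted zero-sum sequence.
   Context: $\mathbb{Z}_m$ is the integers mod $m$, $U(m)$ its unit group. For $A\subseteq\mathbb{Z}_n$, a sequence $(x_1,\ldots,x_l)$ is an $A$-weighted zero-sum sequence if there exist $a_1,\ldots,a_l\in A$ with $\sum a_ix_i=0$. For odd $m=\prod p_i^{r_i}$, prime $p\mid m$ and $a\in U(m)$, $\left(\frac{a}{p}\right)$ is the Legendre symbol of the image mod $p$ and $\left(\frac{a}{m}\right)=\prod\left(\frac{a}{p_i}\right)^{r_i}$; $L(m;p')=\{a\in U(m):\left(\frac{a}{m}\right)=\left(\frac{a}{p'}\right)\}$ for a prime $p'\mid m$. *)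

From mathcomp Require Import all_boot all_order all_algebra.
Set Implicit Arguments. Unset Strict Implicit. Unset Printing Implicit Defensive.
Import GRing.Theory.
Local Open Scope ring_scope.

(* Elements of Z_m are represented by natural numbers (residues). *)

Definition squarefree (n : nat) : Prop :=
  forall p : nat, prime p -> ~~ (p * p %| n)%N.

Definition legendre (p a : nat) : int :=
  if (p %| a)%N then 0
  else if [exists x : 'I_p, (x * x) %% p == a %% p]%N then 1 else -1.

Definition jacobi (m a : nat) : int :=
  \prod_(p <- primes m) legendre p a ^+ logn p m.

Definition Lset (m p' : nat) : pred nat :=
  fun a => [&& (a < m)%N, coprime a m & jacobi m a == legendre p' a].

Definition weighted_zero_sum (n : nat) (A : pred nat) (S : seq nat) : Prop :=
  exists w : seq nat, [/\ size w = size S, all A w &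
    (\sum_(i < size S) nth 0 w i * nth 0 S i == 0 %[mod n])%N].

From mathcomp Require Import all_boot all_order all_algebra zify.
Set Implicit Arguments. Unset Strict Implicit. Unset Printing Implicit Defensive.
Import GRing.Theory.

(* Work one prime q | n at a time.  Since q >= 3 and two terms of S are nonzero
   mod q, some weights, all nonzero mod q, make the sum vanish mod q; rescaling
   makes the weight of the k-th term a square, where k indexes the only term that
   may be a unit mod n' = n/p'.  Every other term x_i is divisible by a prime
   r_i | n', r_i <> p', so its weight mod r_i is free: choose it to be a residue
   or a nonresidue so that the Legendre symbols of the weight at the primes
   q <> p' multiply to 1, i.e. its Jacobi symbol mod n is its Legendre symbol
   mod p'.  The Chinese remainder theorem glues these local weights into weights
   in L(n;p'), and as n is squarefree the weighted sum vanishes mod n. *)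

Lemma seq_choice (T : eqType) (U : Type) (u0 : U) (P : T -> U -> Prop) (s : seq T) :
  {in s, forall x, exists u, P x u} -> exists f : T -> U, {in s, forall x, P x (f x)}.
Proof.
elim: s => [_ | x s IH ex_P]; first by exists (fun=> u0).
have [u Pxu] := ex_P x (mem_head x s).
have [f Pf] : exists f : T -> U, {in s, forall y, P y (f y)}.
  by apply: IH => y y_in; apply: ex_P; rewrite in_cons y_in orbT.
exists (fun y => if y == x then u else f y) => y; rewrite in_cons.
by case: eqP => [-> | _] //= /Pf.
Qed.

Lemma count_gt1_nth (T : Type) (x0 : T) (a : pred T) (s : seq T) :
  1 < count a s ->
  exists i j : 'I_(size s), [/\ i != j, a (nth x0 s i) & a (nth x0 s j)].
Proof.
rewrite -sum1_count (big_nth x0) big_mkord sum1_card => /card_gt1P [i [j [ai aj ij]]].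
by exists i, j.
Qed.

Lemma count_le1_find (T : Type) (x0 : T) (a : pred T) (s : seq T) i :
  count a s <= 1 -> i < size s -> a (nth x0 s i) -> find a s = i.
Proof.
move=> + i_lt a_i; rewrite -(cat_take_drop i s) count_cat find_cat (drop_nth x0 i_lt) /=.
rewrite a_i size_take i_lt; case: ifP => [has_a | _]; last by rewrite addn0.
by rewrite has_count in has_a; lia.
Qed.

Section FieldWeights.
Open Scope ring_scope.
Variable F : fieldType.
Hypothesis two_nz : 2%:R != 0 :> F.

Lemma sum_of_two_nonzero (t : F) : exists u v : F, [/\ u != 0, v != 0 & u + v = t].
Proof.
have [-> | t_nz] := eqVneq t 0.
  by exists 1, (-1); rewrite oppr_eq0 subrr oner_neq0.
exists (t / 2%:R), (t / 2%:R); rewrite mulf_neq0 ?invr_eq0 //.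
by split=> //; rewrite -mulrDr -mulr2n -[_ *+ 2]mulr_natr mulVf ?mulr1.
Qed.

Lemma zero_sum_nonzero_weights (s : seq F) : (1 < count (fun x : F => x != 0%R) s)%N ->
  exists c : nat -> F, (forall i, c i != 0) /\ \sum_(i < size s) c i * s`_i = 0.
Proof.
move=> /(count_gt1_nth 0) [a [b [ab sa_nz sb_nz]]].
(* Weight 1 off two nonzero terms, which absorb a splitting of -T into two nonzero summands. *)
pose T : F := \sum_(i < size s | (i != a) && (i != b)) s`_i.
have [u [v [u_nz v_nz uvT]]] := sum_of_two_nonzero (- T).
pose c i := if i == a :> nat then u / s`_a else if i == b :> nat then v / s`_b else 1.
exists c; split=> [i | ].
  by rewrite /c; case: ifP => _; [|case: ifP => _]; rewrite ?mulf_neq0 ?invr_eq0 ?oner_neq0.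
have cT : \sum_(i < size s | (i != a) && (i != b)) c i * s`_i = T.
  by apply: eq_bigr => i /andP [ia ib]; rewrite /c !val_eqE (negbTE ia) (negbTE ib) mul1r.
have ba : (b == a :> nat) = false by apply/negbTE; rewrite eq_sym.
rewrite (bigD1 a) // (bigD1 b) 1?eq_sym //= cT /c !eqxx ba !divfK //.
by rewrite addrA uvT addNr.
Qed.

End FieldWeights.

Definition wsum (c : nat -> nat) (s : seq nat) : nat := \sum_(i < size s) c i * nth 0 s i.

Lemma eq_wsum_mod q c d s :
    (forall i, i < size s -> c i * nth 0 s i = d i * nth 0 s i %[mod q]) ->
  wsum c s = wsum d s %[mod q].
Proof.
move=> eq_cd; rewrite /wsum -modn_summ -[X in _ = X]modn_summ; congr (_ %% q).
by apply: eq_bigr => i _; apply: eq_cd.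
Qed.

Lemma zero_sum_mod_prime q s : prime q -> 2 < q ->
    1 < count (fun x => ~~ (q %| x)) s ->
  exists c : nat -> nat, (forall i, ~~ (q %| c i)) /\ q %| wsum c s.
Proof.
move=> q_pr q_gt2 cnt.
have dvd_Fp m : (q %| m) = (m%:R == 0 :> 'F_q)%R := dvdn_pcharf (pchar_Fp q_pr) m.
have [||c [c_nz c_sum]] := @zero_sum_nonzero_weights 'F_q _ [seq x%:R | x <- s]%R.
- by rewrite -(dvd_Fp 2); apply/negP => /(dvdn_leq (isT : 0 < 2)); rewrite leqNgt q_gt2.
- by rewrite count_map (eq_count (a2 := fun x => ~~ (q %| x))) // => x; rewrite /= dvd_Fp.
exists (fun i => val (c i)); split=> [i | ]; rewrite dvd_Fp ?natr_Zp //.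
rewrite natr_sum -[X in _ == X]c_sum size_map; apply/eqP/eq_bigr => i _.
by rewrite natrM natr_Zp (nth_map 0).
Qed.

Lemma legendre_mod q a b : a = b %[mod q] -> legendre q a = legendre q b.
Proof. by move=> eq_ab; rewrite /legendre /dvdn eq_ab. Qed.

Lemma legendre_eq0 q a : (legendre q a == 0%R) = (q %| a).
Proof. by rewrite /legendre; case: ifP => // _; case: ifP. Qed.

Lemma sqr_legendre q a : ~~ (q %| a) -> (legendre q a ^+ 2 = 1)%R.
Proof. by rewrite /legendre => /negbTE ->; case: ifP. Qed.

Lemma legendre_square q c : prime q -> ~~ (q %| c) -> legendre q (c * c) = 1%R.
Proof.
move=> q_pr q_nmid; rewrite /legendre Euclid_dvdM // orbb (negbTE q_nmid).
case: ifP => // /existsP []; exists (Ordinal (ltn_pmod c (prime_gt0 q_pr))).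
by rewrite /= modnMml modnMmr.
Qed.

Lemma zero_sum_mod_prime_square q s k : prime q -> 2 < q ->
    1 < count (fun x => ~~ (q %| x)) s ->
  exists c : nat -> nat, [/\ forall i, ~~ (q %| c i), q %| wsum c s & legendre q (c k) = 1%R].
Proof.
move=> q_pr q_gt2 /(zero_sum_mod_prime q_pr q_gt2) [c [c_unit c_sum]].
exists (fun i => c i * c k); split=> [i | | ].
- by rewrite Euclid_dvdM // negb_or !c_unit.
- by rewrite /wsum; under eq_bigr do rewrite mulnAC; rewrite -big_distrl dvdn_mulr.
- exact: legendre_square.
Qed.

Lemma onto_inj (T : finType) (f : T -> T) : (forall y, y \in codom f) -> injective f.
Proof.
move=> f_onto; have /image_injP f_inj : #|image f T| == #|T|.
  by rewrite eqn_leq leq_image_card; apply/subset_leq_card/subsetP => y _; apply: f_onto.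
by move=> x y; apply: f_inj.
Qed.

(* Junk value 0 when there is no nonresidue, i.e. unless q is an odd prime. *)
Definition nonresidue (q : nat) : nat :=
  if [pick y : 'I_q | legendre q y == (-1)%R] is Some y then y else 0.

Lemma legendre_nonresidue q : prime q -> 2 < q -> legendre q (nonresidue q) = (-1)%R.
Proof.
move=> q_pr q_gt2; rewrite /nonresidue; case: pickP => [y /eqP // | no_nonres].
(* Otherwise squaring is onto, hence injective, on 'I_q; but 1 and q - 1 have the same square. *)
have q_gt0 := prime_gt0 q_pr.
pose sq (x : 'I_q) : 'I_q := Ordinal (ltn_pmod (x * x) q_gt0).
have sq_onto y : y \in codom sq.
  apply/codomP; have [y0 | y_gt0] := posnP y.
    by exists y; apply: val_inj; rewrite /= y0 mod0n.
  move: (no_nonres y); rewrite /legendre (gtnNdvd y_gt0 (ltn_ord y)) /=.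
  case: ifP => // /existsP [x /eqP sq_x] _.
  by exists x; apply: val_inj; rewrite /= sq_x modn_small.
have q1 : 1 < q by apply: prime_gt1.
have qm1 : q.-1 < q by rewrite prednK.
have sq_1 : sq (Ordinal q1) = sq (Ordinal qm1).
  have sqr_qm1 : q.-1 * q.-1 = q.-2 * q + 1 by nia.
  by apply: val_inj; rewrite /= sqr_qm1 modnMDl.
by move: (congr1 val (onto_inj sq_onto sq_1)) => /=; lia.
Qed.

Fixpoint crt (ps : seq nat) (r : nat -> nat) : nat :=
  if ps is p :: ps' then chinese p (\prod_(q <- ps') q) (r p) (crt ps' r) else 0.

Lemma crt_mod ps r q : all prime ps -> uniq ps -> q \in ps -> crt ps r = r q %[mod q].
Proof.
elim: ps => //= p ps IH /andP [p_pr ps_pr] /andP [p_notin ps_uniq].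
have p_coprime : coprime p (\prod_(q <- ps) q).
  rewrite prime_coprime // Euclid_dvd_prod // big_has; apply/hasPn => q' q'_in.
  rewrite dvdn_prime2 //; last exact: (allP ps_pr).
  by apply: contraNneq p_notin => ->.
rewrite in_cons => /predU1P [-> | q_in]; first exact: chinese_modl.
have q_dvd : q %| \prod_(q <- ps) q by rewrite (bigD1_seq q) //= dvdn_mulr.
by rewrite -(modn_dvdm _ q_dvd) chinese_modr // modn_dvdm // IH.
Qed.

Lemma crt_primes_mod n r q : q \in primes n -> crt (primes n) r %% n = r q %[mod q].
Proof.
move=> q_in; have q_dvd : q %| n by move: q_in; rewrite mem_primes => /and3P [].
rewrite modn_dvdm // crt_mod ?primes_uniq //.
by apply/allP => p; rewrite mem_primes => /andP [].
Qed.

Lemma squarefree_gt0 n : squarefree n -> 0 < n.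
Proof. by case: n => // /(_ 2 isT). Qed.

Lemma logn_squarefree n q : squarefree n -> q \in primes n -> logn q n = 1.
Proof.
move=> n_sqf q_in; move: (q_in); rewrite mem_primes => /and3P [q_pr n_gt0 _].
apply/eqP; rewrite eqn_leq logn_gt0 q_in andbT leqNgt.
by rewrite -(pfactor_dvdn 2 q_pr n_gt0) -mulnn (negbTE (n_sqf q q_pr)).
Qed.

Lemma squarefree_dvdn n m : squarefree n -> {in primes n, forall q, q %| m} -> n %| m.
Proof.
move=> n_sqf dvd_m; apply/(dvdn_partP _ (squarefree_gt0 n_sqf)) => q q_in.
by rewrite p_part logn_squarefree // expn1 dvd_m.
Qed.

Lemma jacobi_squarefree n a :
  squarefree n -> jacobi n a = (\prod_(q <- primes n) legendre q a)%R.
Proof.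
move=> n_sqf; rewrite /jacobi big_seq [RHS]big_seq.
by apply: eq_bigr => q q_in; rewrite logn_squarefree // expr1.
Qed.

Lemma Lset_crt n p' r : squarefree n -> p' \in primes n ->
    {in primes n, forall q, ~~ (q %| r q)} ->
    (\prod_(q <- primes n | q != p') legendre q (r q))%R = 1%R ->
  Lset n p' (crt (primes n) r %% n).
Proof.
move=> n_sqf p'_in r_unit r_sign; have n_gt0 := squarefree_gt0 n_sqf.
set a := crt _ _ %% n.
have a_unit q : q \in primes n -> ~~ (q %| a).
  by move=> q_in; rewrite /dvdn crt_primes_mod // r_unit.
have a_gt0 : 0 < a by rewrite lt0n; apply: contraNneq (a_unit p' p'_in) => ->.
apply/and3P; split; first exact: ltn_pmod.
  rewrite coprime_has_primes //; apply/hasPn => q q_in.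
  by rewrite /= mem_primes (negbTE (a_unit q q_in)) !andbF.
rewrite jacobi_squarefree // (bigD1_seq p') ?primes_uniq //=.
have -> : (\prod_(q <- primes n | q != p') legendre q a)%R = 1%R.
  rewrite -[X in _ = X]r_sign big_seq_cond [X in _ = X]big_seq_cond.
  by apply: eq_bigr => q /andP [q_in _]; apply/legendre_mod/crt_primes_mod.
by rewrite mulr1.
Qed.

Lemma weighted_zero_sum_of_local n p' S (c : nat -> nat -> nat) :
    squarefree n -> p' \in primes n ->
    {in primes n, forall q, (forall i, ~~ (q %| c q i)) /\ q %| wsum (c q) S} ->
    (forall i, i < size S -> (\prod_(q <- primes n | q != p') legendre q (c q i))%R = 1%R) ->
  weighted_zero_sum n (Lset n p') S.
Proof.
move=> n_sqf p'_in c_local c_sign.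
pose w i := crt (primes n) (c^~ i) %% n.
exists (mkseq w (size S)); split; first by rewrite size_mkseq.
  apply/allP => a /mapP [i]; rewrite mem_iota => /andP [_ i_lt] ->.
  by apply: Lset_crt => // [q /c_local [] | ]; [ | apply: c_sign].
rewrite mod0n; apply/(squarefree_dvdn n_sqf) => q q_in; have [_ q_sum] := c_local q q_in.
rewrite /dvdn (eq_wsum_mod (d := c q)) // => i i_lt.
by rewrite nth_mkseq // -modnMml crt_primes_mod // modnMml.
Qed.

Lemma prime_dvd_odd_gt2 q n : prime q -> q %| n -> odd n -> 2 < q.
Proof.
move=> q_pr q_dvd n_odd; rewrite ltn_neqAle prime_gt1 // andbT.
by apply: contraTneq q_dvd => <-; rewrite dvdn2 n_odd.
Qed.

Section SignAdjustment.

Variables (n p' : nat) (S : seq nat).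
Hypotheses (n_odd : odd n) (n_sqf : squarefree n) (p'_pr : prime p') (p'_dvd : p' %| n).
Hypothesis S_nonzero : forall p, prime p -> p %| n -> 2 <= count (fun x => coprime x p) S.
Local Notation n' := (n %/ p').
Hypothesis S'_units : count (fun x => coprime (x %% n') n') S <= 1.

Let n_gt0 : 0 < n := squarefree_gt0 n_sqf.
Let k := find (fun x => coprime (x %% n') n') S.
Let r i := pdiv (gcdn (nth 0 S i) n').

Lemma p'_in_primes : p' \in primes n.
Proof. by rewrite mem_primes p'_pr n_gt0. Qed.

Lemma primes_gt2 q : q \in primes n -> prime q /\ 2 < q.
Proof.
rewrite mem_primes => /and3P [q_pr _ q_dvd]; split=> //.
exact: prime_dvd_odd_gt2 q_dvd n_odd.
Qed.

Lemma nonunit_factor i : i < size S -> i != k ->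
  [/\ r i \in primes n, r i != p' & r i %| nth 0 S i].
Proof.
move=> i_lt i_ne_k.
have n'_dvd : n' %| n by apply/dvdnP; exists p'; rewrite mulnC divnK.
have n'_gt0 : 0 < n' by rewrite divn_gt0 ?prime_gt0 // dvdn_leq.
have p'_ndvd : ~~ (p' %| n').
  apply/negP => p'_dvd_n'; have := n_sqf p'_pr.
  by rewrite -(divnK p'_dvd) dvdn_pmul2r ?prime_gt0 // p'_dvd_n'.
have gcd_gt1 : 1 < gcdn (nth 0 S i) n'.
  rewrite ltn_neqAle gcdn_gt0 n'_gt0 orbT andbT eq_sym.
  apply: contra i_ne_k => unit_i.
  by rewrite /k (count_le1_find (x0 := 0) S'_units i_lt) // coprime_modl.
have r_dvd_gcd : r i %| gcdn (nth 0 S i) n' := pdiv_dvd _.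
have r_dvd_n' := dvdn_trans r_dvd_gcd (dvdn_gcdr _ _).
split; last exact: dvdn_trans r_dvd_gcd (dvdn_gcdl _ _).
  by rewrite mem_primes pdiv_prime // n_gt0 (dvdn_trans r_dvd_n').
by apply: contraNneq p'_ndvd => {1}<-.
Qed.

Lemma local_weights : {in primes n, forall q, exists c : nat -> nat,
  [/\ forall i, ~~ (q %| c i), q %| wsum c S & legendre q (c k) = 1%R]}.
Proof.
move=> q q_in; have [q_pr q_gt2] := primes_gt2 q_in.
apply: zero_sum_mod_prime_square => //.
have q_dvd : q %| n by move: q_in; rewrite mem_primes => /and3P [].
by under eq_count do rewrite -prime_coprime // coprime_sym; apply: S_nonzero.
Qed.

Variable c : nat -> nat -> nat.
Hypothesis c_local : {in primes n, forall q,
  [/\ forall i, ~~ (q %| c q i), q %| wsum (c q) S & legendre q (c q k) = 1%R]}.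

Definition other_symbols i :=
  (\prod_(q <- primes n | (q != p') && (q != r i)) legendre q (c q i))%R.

Definition adjusted_weight q i :=
  if (i != k) && (q == r i) then (if other_symbols i == 1%R then 1 else nonresidue q)
  else c q i.

Lemma sqr_other_symbols i : (other_symbols i ^+ 2 = 1)%R.
Proof.
rewrite -prodrXl big_seq_cond big1 // => q /andP [q_in _].
by have [c_unit _ _] := c_local q_in; apply: sqr_legendre.
Qed.

Lemma legendre_adjusted_weight i : i < size S -> i != k ->
  legendre (r i) (adjusted_weight (r i) i) = other_symbols i.
Proof.
move=> i_lt i_ne_k; have [r_in _ _] := nonunit_factor i_lt i_ne_k.
have [r_pr r_gt2] := primes_gt2 r_in.
rewrite /adjusted_weight i_ne_k eqxx /=; case: eqP => [-> | symbols_ne1].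
  by apply: (@legendre_square _ 1); rewrite ?dvdn1 ?gtn_eqF ?prime_gt1.
move: (sqr_other_symbols i) => /eqP; rewrite sqrf_eq1 => /orP [/eqP // | /eqP ->].
exact: legendre_nonresidue.
Qed.

Lemma adjusted_weight_unit q i : q \in primes n -> ~~ (q %| adjusted_weight q i).
Proof.
move=> q_in; have [q_pr q_gt2] := primes_gt2 q_in.
rewrite /adjusted_weight; case: ifP => _; last by have [] := c_local q_in.
case: ifP => _; first by rewrite dvdn1 gtn_eqF ?prime_gt1.
by rewrite -legendre_eq0 legendre_nonresidue.
Qed.

Lemma adjusted_weight_zero_sum q : q \in primes n -> q %| wsum (adjusted_weight q) S.
Proof.
move=> q_in; have [_ q_sum _] := c_local q_in.
rewrite /dvdn (eq_wsum_mod (d := c q)) // => i i_lt.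
rewrite /adjusted_weight; case: ifP => // /andP [i_ne_k /eqP ->].
have [_ _ /dvdn_mull r_dvd] := nonunit_factor i_lt i_ne_k.
by rewrite (eqP (r_dvd _)) (eqP (r_dvd _)).
Qed.

Lemma adjusted_weight_symbols i : i < size S ->
  (\prod_(q <- primes n | q != p') legendre q (adjusted_weight q i))%R = 1%R.
Proof.
move=> i_lt; have [-> | i_ne_k] := eqVneq i k.
  rewrite big_seq_cond big1 // => q /andP [q_in _].
  by rewrite /adjusted_weight eqxx; have [] := c_local q_in.
have [r_in r_ne_p' _] := nonunit_factor i_lt i_ne_k.
rewrite -big_filter (bigD1_seq (r i)) ?filter_uniq ?primes_uniq ?mem_filter ?r_ne_p' //=.
rewrite big_filter_cond legendre_adjusted_weight // -[RHS](sqr_other_symbols i) expr2.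
congr (_ * _)%R; apply: eq_bigr => q /andP [_ q_ne_r].
by rewrite /adjusted_weight (negbTE q_ne_r) andbF.
Qed.

End SignAdjustment.

Theorem lemma3p6 (n p' : nat) (S : seq nat) :
  odd n -> squarefree n ->
  prime p' -> (p' %| n)%N ->
  all (fun x => x < n)%N S ->
  (forall p, prime p -> (p %| n)%N -> (2 <= count (fun x => coprime x p) S)%N) ->
  (count (fun x => coprime (x %% (n %/ p')) (n %/ p')) S <= 1)%N ->
  weighted_zero_sum n (Lset n p') S.
Proof.
(* The terms need not be reduced residues: everything is invariant mod n. *)
move=> n_odd n_sqf p'_pr p'_dvd _ S_nonzero S'_units.
have [c c_local] := seq_choice (fun=> 0) (local_weights p' n_odd S_nonzero).
apply: (weighted_zero_sum_of_local (c := adjusted_weight n p' S c)) => //.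
- exact: p'_in_primes.
- by move=> q q_in; split=> [i |]; [apply: adjusted_weight_unit | apply: adjusted_weight_zero_sum].
- by move=> i; apply: adjusted_weight_symbols.
Qed.
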